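(* Let $\Gamma$ be a discrete subgroup of $E(n)$, and suppose that $(G,V)$ and $(G',V')$ are finite index cocompact translation pairs of $\Gamma$. Then $V'=V+a$ for some $a\in\mathbb{R}^n$; in particular $\dim V=\dim V'$.
   Context: $E(n)$ denotes the group of isometries of $\mathbb{R}^n$, each of the form $x\mapsto Ax+a$ with $A\in O(n)$, with the topology of $O(n)\times\mathbb{R}^n$; discreteness refers to this topology. For a discrete $\Gamma\le E(n)$, a subgroup $G\le\Gamma$ and an affine subspace $V\subset\mathbb{R}^n$, the pair $(G,V)$ is a cocompact translation pair of $\Gamma$ if $gV=V$ for all $g\in G$, each restriction $g|_V$ is a translation of $V$, and the quotient $V/G$ is compact; it is a finite index cocompact translation pair if moreover $[\Gamma:G]<\infty$. *)

From Stdlib Require Import Reals List.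
From mathcomp Require Import ssreflect ssrfun ssrbool eqtype ssrnat fintype bigop.
Set Implicit Arguments.
Unset Strict Implicit.

Open Scope R_scope.

Definition vec (n : nat) := 'I_n -> R.

Definition vadd n (x y : vec n) : vec n := fun i => x i + y i.
Definition vsub n (x y : vec n) : vec n := fun i => x i - y i.
Definition vscale n (t : R) (x : vec n) : vec n := fun i => t * x i.

(* sup-norm distance (induces the standard topology of R^n) *)
Definition vclose n (x y : vec n) (e : R) : Prop := forall i, Rabs (x i - y i) < e.

(* An element of E(n): x |-> A x + a, recorded by the pair (A, a). *)
Record isom (n : nat) := Isom { lin : 'I_n -> 'I_n -> R ; trans : vec n }.

Definition orthogonal n (A : 'I_n -> 'I_n -> R) : Prop :=
  forall i j : 'I_n,
    \big[Rplus/0]_(k < n) (A k i * A k j) = if i == j then 1 else 0.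

Definition in_En n (g : isom n) : Prop := orthogonal (lin g).

Definition act n (g : isom n) (x : vec n) : vec n :=
  fun i => \big[Rplus/0]_(j < n) (lin g i j * x j) + trans g i.

(* group law of E(n): (g * h) x = g (h x) *)
Definition isom_comp n (g h : isom n) : isom n :=
  Isom (fun i j => \big[Rplus/0]_(k < n) (lin g i k * lin h k j))
       (fun i => \big[Rplus/0]_(k < n) (lin g i k * trans h k) + trans g i).

Definition isom_id n : isom n :=
  Isom (fun i j => if i == j then 1 else 0) (fun _ => 0).

Definition isom_inv n (g : isom n) : isom n :=
  Isom (fun i j => lin g j i)
       (fun i => - \big[Rplus/0]_(k < n) (lin g k i * trans g k)).

Definition subgroup_En n (S : isom n -> Prop) : Prop :=
  (forall g, S g -> in_En g) /\
  S (isom_id n) /\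
  (forall g h, S g -> S h -> S (isom_comp g h)) /\
  (forall g, S g -> S (isom_inv g)).

(* Discreteness in the topology of O(n) x R^n (entrywise / sup metric). *)
Definition isom_close n (g h : isom n) (e : R) : Prop :=
  (forall i j, Rabs (lin g i j - lin h i j) < e) /\
  (forall i, Rabs (trans g i - trans h i) < e).

Definition discrete n (S : isom n -> Prop) : Prop :=
  forall g, S g -> exists e, 0 < e /\
    forall h, S h -> isom_close g h e -> h = g.

Definition subgroup_of n (G Gamma : isom n -> Prop) : Prop :=
  subgroup_En G /\ forall g, G g -> Gamma g.

(* [Gamma : G] < infinity: finitely many left cosets g G cover Gamma *)
Definition finite_index n (G Gamma : isom n -> Prop) : Prop :=
  exists l : list (isom n),
    (forall g, In g l -> Gamma g) /\
    forall x, Gamma x -> exists g h, In g l /\ G h /\ x = isom_comp g h.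

Definition affine_subspace n (V : vec n -> Prop) : Prop :=
  (exists p, V p) /\
  forall x y t, V x -> V y ->
    V (vadd (vscale (1 - t) x) (vscale t y)).

Definition preserves n (g : isom n) (V : vec n -> Prop) : Prop :=
  forall y, V y <-> exists x, V x /\ act g x = y.

Definition translation_on n (g : isom n) (V : vec n -> Prop) : Prop :=
  exists b : vec n, forall x, V x -> act g x = vadd x b.

(* Compactness of V/G in the quotient topology: the open sets of V/G are
   exactly the images of G-invariant, relatively open subsets of V. *)
Definition rel_open n (V U : vec n -> Prop) : Prop :=
  (forall x, U x -> V x) /\
  forall x, U x -> exists e, 0 < e /\ forall y, V y -> vclose x y e -> U y.

Definition G_invariant n (G : isom n -> Prop) (U : vec n -> Prop) : Prop :=
  forall g x, G g -> U x -> U (act g x).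

Definition quotient_compact n (G : isom n -> Prop) (V : vec n -> Prop) : Prop :=
  forall (I : Type) (U : I -> vec n -> Prop),
    (forall i, rel_open V (U i) /\ G_invariant G (U i)) ->
    (forall x, V x -> exists i, U i x) ->
    exists l : list I, forall x, V x -> exists i, In i l /\ U i x.

Definition cocompact_translation_pair n (Gamma G : isom n -> Prop)
  (V : vec n -> Prop) : Prop :=
  subgroup_of G Gamma /\ affine_subspace V /\
  (forall g, G g -> preserves g V) /\
  (forall g, G g -> translation_on g V) /\
  quotient_compact G V.

Definition fi_cocompact_translation_pair n (Gamma G : isom n -> Prop)
  (V : vec n -> Prop) : Prop :=
  cocompact_translation_pair Gamma G V /\ finite_index G Gamma.

From HB Require Import structures.
From Stdlib Require Import Reals List Lra FunctionalExtensionality Classical ClassicalEpsilon.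
From mathcomp Require Import ssreflect ssrfun ssrbool eqtype ssrnat seq fintype bigop.
Set Implicit Arguments.
Unset Strict Implicit.
Open Scope R_scope.

(* If g in G translates V by b, some power g^k lies in G' (finite index) and translates
   V by k b and V' by some b'. Its linear part A is orthogonal, fixes c = k b - b' and maps
   y - x to (y - x) - c for x in V, y in V'; as A preserves inner products, |c|^2 = 0 and
   b is a direction of V'. So G moves points of V without changing their distance to V',
   and compactness of V/G bounds the distance from V to V'. Then every direction of V is
   a limit of directions of V', which form a closed linear subspace. By symmetry V and V'
   have the same directions, hence are translates. *)

HB.instance Definition _ := Monoid.isComLaw.Build R 0 Rplus
  (fun a b c => esym (Rplus_assoc a b c)) Rplus_comm Rplus_0_l.
HB.instance Definition _ := Monoid.isMulLaw.Build R 0 Rmult Rmult_0_l Rmult_0_r.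
HB.instance Definition _ := Monoid.isAddLaw.Build R Rmult Rplus
  Rmult_plus_distr_r Rmult_plus_distr_l.

Ltac vec_ring :=
  apply: functional_extensionality => ?; rewrite /vadd /vsub /vscale /=; ring.

Lemma sumR_opp n (F : 'I_n -> R) :
  \big[Rplus/0]_(k < n) - F k = - \big[Rplus/0]_(k < n) F k.
Proof.
rewrite (eq_bigr (fun k => -1 * F k)); last by move=> k _; ring.
rewrite -big_distrr /=; ring.
Qed.

Lemma sumR_ge_term n (F : 'I_n -> R) i :
  (forall j, 0 <= F j) -> F i <= \big[Rplus/0]_(k < n) F k.
Proof.
move=> F_ge0; rewrite (bigD1 i) //=.
rewrite -{1}[F i]Rplus_0_r; apply: Rplus_le_compat_l.
by apply: (big_ind (fun x => 0 <= x)) => [|x y|j _]; [lra | lra | apply: F_ge0].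
Qed.

Lemma sumR_delta n (i : 'I_n) (x : 'I_n -> R) :
  \big[Rplus/0]_(k < n) ((if i == k then 1 else 0) * x k) = x i.
Proof.
rewrite (bigD1 i) //= eqxx big1 => [|k /negPf ik]; first ring.
by rewrite eq_sym ik Rmult_0_l.
Qed.

Definition mxv n (A : 'I_n -> 'I_n -> R) (v : vec n) : vec n :=
  fun i => \big[Rplus/0]_(j < n) (A i j * v j).

Definition mxtv n (A : 'I_n -> 'I_n -> R) (v : vec n) : vec n :=
  fun i => \big[Rplus/0]_(j < n) (A j i * v j).

Definition dotv n (u v : vec n) : R := \big[Rplus/0]_(j < n) (u j * v j).

Lemma act_comp n (g h : isom n) x : act (isom_comp g h) x = act g (act h x).
Proof.
apply: functional_extensionality => i; rewrite /act /= -Rplus_assoc; congr (_ + _).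
under eq_bigr => j _ do rewrite big_distrl.
rewrite exchange_big -big_split /=.
apply: eq_bigr => k _; rewrite Rmult_plus_distr_l big_distrr; congr (_ + _).
by apply: eq_bigr => j _ /=; ring.
Qed.

Lemma act_id n x : act (isom_id n) x = x.
Proof. apply: functional_extensionality => i; rewrite /act /= sumR_delta; ring. Qed.

Lemma mxtv_mxv n (A : 'I_n -> 'I_n -> R) v : orthogonal A -> mxtv A (mxv A v) = v.
Proof.
move=> orthA; apply: functional_extensionality => i; rewrite /mxtv /mxv.
under eq_bigr => k _ do rewrite big_distrr.
rewrite exchange_big -[RHS](sumR_delta i v) /=; apply: eq_bigr => j _.
rewrite -orthA big_distrl; apply: eq_bigr => k _ /=; ring.
Qed.

Lemma act_inv n (g : isom n) x : in_En g -> act (isom_inv g) (act g x) = x.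
Proof.
move=> Hg; rewrite -[RHS](mxtv_mxv x Hg).
apply: functional_extensionality => i; rewrite /act /mxtv /mxv /=.
under eq_bigr => j _ do rewrite Rmult_plus_distr_l.
rewrite big_split /=; ring.
Qed.

Lemma mxv_sub n A (u v : vec n) : mxv A (vsub u v) = vsub (mxv A u) (mxv A v).
Proof.
apply: functional_extensionality => i; rewrite /mxv /vsub /Rminus -sumR_opp -big_split.
by apply: eq_bigr => j _ /=; ring.
Qed.

Lemma act_sub n (g : isom n) x y : vsub (act g y) (act g x) = mxv (lin g) (vsub y x).
Proof. rewrite mxv_sub; apply: functional_extensionality => i; rewrite /vsub /act /mxv; ring. Qed.

Lemma dotv_mxv n A (u w : vec n) : dotv u (mxv A w) = dotv (mxtv A u) w.
Proof.
rewrite /dotv /mxv /mxtv.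
under eq_bigr => i _ do rewrite big_distrr.
rewrite exchange_big; apply: eq_bigr => j _; rewrite big_distrl.
by apply: eq_bigr => i _ /=; ring.
Qed.

Lemma dotv_sub n (c w u : vec n) : dotv c (vsub w u) = dotv c w - dotv c u.
Proof.
rewrite /dotv /vsub /Rminus -sumR_opp -big_split.
by apply: eq_bigr => j _ /=; ring.
Qed.

Lemma dotv_self_eq0 n (c : vec n) : dotv c c = 0 -> c = (fun _ => 0).
Proof.
move=> cc0; apply: functional_extensionality => i.
have := @sumR_ge_term n (fun j => c j * c j) i (fun j => ltac:(nra)).
rewrite -/(dotv c c) cc0; nra.
Qed.

(* [<c, w> = <A^T c, w> = <c, A w> = <c, w> - |c|^2] *)
Lemma orthogonal_shift_eq0 n (A : 'I_n -> 'I_n -> R) (c w : vec n) :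
  orthogonal A -> mxv A c = c -> mxv A w = vsub w c -> c = (fun _ => 0).
Proof.
move=> orthA Ac Aw; apply: dotv_self_eq0.
have ATc : mxtv A c = c by rewrite -{1}Ac mxtv_mxv.
have := dotv_mxv A c w; rewrite ATc Aw dotv_sub; lra.
Qed.

Definition direction n (V : vec n -> Prop) (d : vec n) : Prop :=
  forall x, V x -> V (vadd x d).

Definition subspace n (W : vec n -> Prop) : Prop :=
  [/\ W (fun _ => 0), (forall u v, W u -> W v -> W (vadd u v))
    & (forall t u, W u -> W (vscale t u))].

Definition adherent n (W : vec n -> Prop) (d : vec n) : Prop :=
  forall e, 0 < e -> exists w, W w /\ vclose d w e.

Lemma direction_sub n (V : vec n -> Prop) u w :
  affine_subspace V -> V u -> V w -> direction V (vsub u w).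
Proof.
move=> [_ HV] Vu Vw x Vx.
have := HV _ _ (-1) (HV _ _ (/2) Vx Vu) Vw.
congr V; apply: functional_extensionality => i; rewrite /vadd /vscale /vsub; field.
Qed.

Lemma direction_scale n (V : vec n -> Prop) t d :
  affine_subspace V -> direction V d -> direction V (vscale t d).
Proof.
move=> [_ HV] Vd x Vx; have := HV _ _ t Vx (Vd x Vx).
by congr V; vec_ring.
Qed.

Lemma direction_subspace n (V : vec n -> Prop) :
  affine_subspace V -> subspace (direction V).
Proof.
move=> affV; split=> [x Vx|u v Vu Vv x Vx|t u Vu]; last exact: direction_scale.
  by congr V: Vx; vec_ring.
by have := Vv _ (Vu x Vx); congr V; vec_ring.
Qed.

Lemma vec_bound n (f : vec n) : exists K, forall i, Rabs (f i) <= K.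
Proof.
exists (\big[Rplus/0]_(k < n) Rabs (f k)) => i.
exact: (@sumR_ge_term n (fun k => Rabs (f k)) i (fun j => Rabs_pos _)).
Qed.

Section Elimination.

Variables (n : nat) (W : vec n -> Prop) (u : vec n) (i0 : 'I_n).
Hypotheses (subW : subspace W) (Wu : W u) (ui0 : u i0 <> 0).

Definition eliminate (w : vec n) : vec n := vadd w (vscale (- (w i0 / u i0)) u).

Let W0 (w : vec n) : Prop := W w /\ w i0 = 0.

Lemma subspace_eliminated : subspace W0.
Proof.
have [Wzero WD WZ] := subW.
split=> [|v w [Wv v0] [Ww w0]|t w [Ww w0]]; first by split=> //.
  by split; [apply: WD | rewrite /vadd v0 w0; ring].
by split; [apply: WZ | rewrite /vscale w0; ring].
Qed.

Lemma eliminate_in w : W w -> W0 (eliminate w).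
Proof.
have [_ WD WZ] := subW; move=> Ww.
split; first by apply: WD => //; apply: WZ.
by rewrite /eliminate /vadd /vscale; field.
Qed.

Lemma adherent_eliminate d : adherent W d -> adherent W0 (eliminate d).
Proof.
move=> Wd e e_gt0.
have [K HK] := vec_bound (fun i => u i / u i0).
have K_ge0 : 0 <= K by apply: Rle_trans (HK i0); apply: Rabs_pos.
have [w [Ww dw]] := Wd (e / (1 + K)) ltac:(apply: Rdiv_lt_0_compat; lra).
exists (eliminate w); split; first exact: eliminate_in.
move=> i; rewrite /eliminate /vadd /vscale.
have -> : d i + - (d i0 / u i0) * u i - (w i + - (w i0 / u i0) * u i)
  = (d i - w i) - (d i0 - w i0) * (u i / u i0) by field.
have eK : e / (1 + K) * (1 + K) = e by field; lra.
apply: Rle_lt_trans (Rabs_triang _ _) _; rewrite Rabs_Ropp Rabs_mult.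
have := Rmult_le_compat _ _ _ _ (Rabs_pos _) (Rabs_pos _) (Rlt_le _ _ (dw i0)) (HK i).
have := dw i; nra.
Qed.

Lemma eliminateK d : d = vadd (eliminate d) (vscale (d i0 / u i0) u).
Proof. by rewrite /eliminate; vec_ring. Qed.

End Elimination.

(* Kill coordinate [m] by elimination along a vector of [W] nonzero there, then recurse. *)
Lemma subspace_closed_supp n (m : nat) (W : vec n -> Prop) :
  subspace W -> (forall w, W w -> forall i : 'I_n, (m <= i)%N -> w i = 0) ->
  forall d, adherent W d -> W d.
Proof.
elim: m W => [|m IH] W subW suppW d Wd.
  have [Wzero _ _] := subW; congr W: Wzero; apply: functional_extensionality => i; apply: esym.
  apply: NNPP => di0; have [w [Ww dw]] := Wd _ (Rabs_pos_lt _ di0).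
  by have := dw i; rewrite (suppW w Ww i (leq0n _)) Rminus_0_r; lra.
case: (classic (exists (i0 : 'I_n) u, nat_of_ord i0 = m /\ W u /\ u i0 <> 0)).
  move=> [i0 [u [i0m [Wu ui0]]]].
  have [_ WD WZ] := subW.
  rewrite (eliminateK u i0 d); apply: WD; last exact: WZ.
  suff [] : W (eliminate u i0 d) /\ eliminate u i0 d i0 = 0 by [].
  apply: (IH (fun w => W w /\ w i0 = 0));
    [exact: subspace_eliminated | | exact: adherent_eliminate].
  move=> w [Ww w0] i; rewrite leq_eqVlt => /orP[/eqP mi | /(suppW w Ww i) //].
  by rewrite (_ : i = i0) //; apply: val_inj; rewrite /= i0m mi.
move=> noW; apply: IH => // w Ww i.
rewrite leq_eqVlt => /orP[/eqP mi | /(suppW w Ww i) //].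
by apply: NNPP => wi; apply: noW; exists i, w.
Qed.

Lemma subspace_closed n (W : vec n -> Prop) d : subspace W -> adherent W d -> W d.
Proof.
move=> subW; apply: (subspace_closed_supp (m := n)) => // w _ i.
by rewrite leqNgt ltn_ord.
Qed.

Lemma pigeonhole (m : nat) (P : nat -> nat -> Prop) :
  (forall i, exists k, (k < m)%N /\ P i k) ->
  exists i j k, [/\ (i < j)%N, P i k & P j k].
Proof.
move=> HP; pose f i := proj1_sig (constructive_indefinite_description _ (HP i)).
have [f_lt f_P] : (forall i, f i < m)%N /\ (forall i, P i (f i)).
  by split=> i; rewrite /f; case: constructive_indefinite_description => k [].
pose F (i : 'I_m.+1) : 'I_m := Ordinal (f_lt i).
apply: NNPP => noP.
have F_inj : injective F.
  move=> a b /(f_equal val) /= fab; apply: val_inj.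
  case: (ltngtP a b) => // [ab | ba]; exfalso; apply: noP.
  - by exists a, b, (f a); split=> //; rewrite fab.
  - by exists b, a, (f a); split=> //; rewrite fab.
by have := leq_card _ F_inj; rewrite !card_ord ltnn.
Qed.

Fixpoint isom_pow n (g : isom n) (k : nat) : isom n :=
  if k is k'.+1 then isom_comp g (isom_pow g k') else isom_id n.

Lemma isom_pow_in n (S : isom n -> Prop) g k : subgroup_En S -> S g -> S (isom_pow g k).
Proof. by move=> [_ [S1 [SM _]]] Sg; elim: k => [|k IH] //=; apply: SM. Qed.

Lemma act_isom_pow n (g : isom n) k x : act (isom_pow g k) x = iter k (act g) x.
Proof. by elim: k => [|k IH] /=; rewrite ?act_id // act_comp IH. Qed.

(* Two powers [g^i = c h_i] and [g^j = c h_j] in the same coset give [g^(j-i) = h_i^-1 h_j]. *)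
Lemma finite_index_power n (Gamma G : isom n -> Prop) g :
  subgroup_En Gamma -> subgroup_of G Gamma -> finite_index G Gamma -> Gamma g ->
  exists2 k, (0 < k)%N & exists2 h, G h & forall x, act h x = iter k (act g) x.
Proof.
move=> GammaE [[GE [_ [GM GV]]] _] [l [l_Gamma cover]] Gamma_g.
have [i [j [k [ij [hi Ghi gi] [hj Ghj gj]]]]] :
    exists i j k, [/\ (i < j)%N,
      exists2 h, G h & isom_pow g i = isom_comp (List.nth k l (isom_id n)) h
    & exists2 h, G h & isom_pow g j = isom_comp (List.nth k l (isom_id n)) h].
  apply: (pigeonhole (m := length l)) => i.
  have [c [h [lc [Gh gi]]]] := cover _ (isom_pow_in i GammaE Gamma_g).
  have [k [kl ck]] := In_nth _ _ (isom_id n) lc.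
  by exists k; split; [apply/ltP | exists h; rewrite // ck].
set c := List.nth k l (isom_id n) in gi gj.
have cE : in_En c.
  apply: GammaE.1; rewrite /c; case: (nth_in_or_default k l (isom_id n)) => [/l_Gamma // | ->].
  exact: GammaE.2.1.
exists (j - i)%N; first by rewrite subn_gt0.
exists (isom_comp (isom_inv hi) hj); first by apply: GM => //; apply: GV.
move=> x; have hj_hi : act hj x = act hi (iter (j - i) (act g) x).
  rewrite -[LHS](act_inv _ cE) -[RHS](act_inv _ cE); congr (act _ _).
  rewrite -!act_comp -gi -gj.
  by rewrite !act_isom_pow -iterD subnKC // ltnW.
by rewrite act_comp hj_hi act_inv //; apply: GE.
Qed.

Lemma preserved_translation_direction n (g : isom n) (V : vec n -> Prop) b :
  preserves g V -> (forall x, V x -> act g x = vadd x b) -> direction V b.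
Proof. by move=> gV gb x Vx; rewrite -gb //; apply/gV; exists x. Qed.

Lemma iter_translation n (g : isom n) (V : vec n -> Prop) b k x :
  affine_subspace V -> direction V b -> (forall x, V x -> act g x = vadd x b) -> V x ->
  iter k (act g) x = vadd x (vscale (INR k) b).
Proof.
move=> affV Vb gb Vx; elim: k => [|k IH]; first by rewrite /=; vec_ring.
rewrite iterS IH gb; last exact: (direction_scale _ affV).
by rewrite S_INR; vec_ring.
Qed.

Lemma lin_fixes_translation n (h : isom n) (V : vec n -> Prop) b x :
  V x -> direction V b -> (forall z, V z -> act h z = vadd z b) -> mxv (lin h) b = b.
Proof.
move=> Vx Vb hb; have bxx : vsub (vadd x b) x = b by vec_ring.
by rewrite -{1}bxx -act_sub !hb //; [vec_ring | exact: Vb].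
Qed.

Lemma translation_vector_direction n (Gamma G : isom n -> Prop) (V V' : vec n -> Prop) g b :
  subgroup_En Gamma -> subgroup_of G Gamma -> finite_index G Gamma ->
  affine_subspace V -> affine_subspace V' ->
  (forall h, G h -> preserves h V') -> (forall h, G h -> translation_on h V') ->
  Gamma g -> direction V b -> (forall x, V x -> act g x = vadd x b) -> direction V' b.
Proof.
move=> GammaE GGamma fiG affV affV' presV' trV' Gamma_g Vb gb.
have [k k_gt0 [h Gh hg]] := finite_index_power GammaE GGamma fiG Gamma_g.
have [b' hb'] := trV' h Gh.
have V'b' := preserved_translation_direction (presV' h Gh) hb'.
have hkb x : V x -> act h x = vadd x (vscale (INR k) b).
  by move=> Vx; rewrite hg (iter_translation k affV Vb gb Vx).
have [[x Vx] _] := affV; have [[y V'y] _] := affV'.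
have drift0 : vsub (vscale (INR k) b) b' = (fun _ => 0).
  apply: (orthogonal_shift_eq0 (w := vsub y x) (GGamma.1.1 h Gh)).
    rewrite mxv_sub (lin_fixes_translation V'y V'b' hb').
    by rewrite (lin_fixes_translation Vx _ hkb) //; apply: direction_scale.
  by rewrite -act_sub hb' // hkb //; vec_ring.
have k_neq0 : INR k <> 0 by apply: not_0_INR => k0; rewrite k0 in k_gt0.
have -> : b = vscale (/ INR k) b'.
  apply: functional_extensionality => i; have := f_equal (fun f => f i) drift0.
  rewrite /vsub /vscale => kb_b'; by rewrite (_ : b' i = INR k * b i); [field | lra].
exact: direction_scale _ affV' V'b'.
Qed.

Definition near n (V : vec n -> Prop) (r : R) (x : vec n) : Prop :=
  exists z s, [/\ V z, s < r & vclose x z s].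

Lemma rel_open_near n (V V' : vec n -> Prop) r :
  rel_open V (fun x => V x /\ near V' r x).
Proof.
split=> [x [] // | x [Vx [z [s [V'z sr xz]]]]].
exists ((r - s) / 2); split=> [|y Vy xy]; first lra.
split=> //; exists z, (s + (r - s) / 2); split=> [//||i]; first lra.
rewrite (_ : y i - z i = (x i - z i) - (x i - y i)); last ring.
have := Rabs_triang (x i - z i) (- (x i - y i)); rewrite Rabs_Ropp.
have := xz i; have := xy i; rewrite /Rminus; lra.
Qed.

Lemma near_translate n (V : vec n -> Prop) r x b :
  direction V b -> near V r x -> near V r (vadd x b).
Proof.
move=> Vb [z [s [Vz sr xz]]]; exists (vadd z b), s; split=> // [|i]; first exact: Vb.
by rewrite /vadd (_ : x i + b i - (z i + b i) = x i - z i) //; ring.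
Qed.

Lemma near_some n (V : vec n -> Prop) x : (exists p, V p) -> exists r : nat, near V (INR r) x.
Proof.
move=> [p Vp]; have [K HK] := vec_bound (vsub x p).
have [r Kr] := INR_unbounded (K + 1).
by exists r, p, (K + 1); split=> // i; have := HK i; rewrite /vsub; lra.
Qed.

Lemma leq_sumn_In (l : seq nat) r : In r l -> (r <= sumn l)%N.
Proof.
elim: l => [|a l IH] //= [-> | /IH rl]; first exact: leq_addr.
exact: leq_trans rl (leq_addl _ _).
Qed.

(* Cover [V] by the open, [G]-invariant sets of points within [INR r] of [V']. *)
Lemma quotient_compact_near n (G : isom n -> Prop) (V V' : vec n -> Prop) :
  quotient_compact G V -> (forall g, G g -> preserves g V) ->
  (forall g, G g -> exists2 b, (forall x, V x -> act g x = vadd x b) & direction V' b) ->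
  (exists p, V' p) ->
  exists2 r, 0 < r & forall x, V x -> near V' r x.
Proof.
move=> cptV presV trV V'_n0.
have [l cover] : exists l : list nat, forall x, V x ->
    exists i, In i l /\ (V x /\ near V' (INR i) x).
  apply: cptV => [r | x Vx]; last first.
    by have [r Vr] := near_some x V'_n0; exists r.
  split=> [|g x Gg [Vx Vnx]]; first exact: rel_open_near.
  have [b gb V'b] := trV g Gg; rewrite gb //.
  by split; [rewrite -gb //; apply/(presV g Gg); exists x | exact: near_translate].
exists (INR (sumn l) + 1) => [|x Vx]; first by have := pos_INR (sumn l); lra.
have [r [lr [_ [z [s [V'z sr xz]]]]]] := cover x Vx.
exists z, s; split=> //; have := le_INR _ _ (leP (leq_sumn_In lr)); lra.
Qed.

(* [d] is approximated by [(z1 - z0) / t] where [z0], [z1] are points of [V'] close to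
   [p] and [p + t d]. *)
Lemma near_direction_incl n (V V' : vec n -> Prop) r :
  affine_subspace V -> affine_subspace V' -> 0 < r -> (forall x, V x -> near V' r x) ->
  forall d, direction V d -> direction V' d.
Proof.
move=> affV affV' r_gt0 nearV d Vd.
apply: subspace_closed (direction_subspace affV') _ => e e_gt0.
have [[p Vp] _] := affV; pose t := 2 * r / e + 1.
have t_gt0 : 0 < t.
  have : 0 < 2 * r / e by apply: Rdiv_lt_0_compat; lra.
  by rewrite /t => ?; lra.
have te : t * e = 2 * r + e by rewrite /t; field; lra.
have [z0 [s0 [V'z0 s0r pz0]]] := nearV p Vp.
have [z1 [s1 [V'z1 s1r pz1]]] := nearV _ (direction_scale t affV Vd Vp).
exists (vscale (/ t) (vsub z1 z0)); split.
  exact: direction_scale (direction_sub affV' V'z1 V'z0).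
move=> i; have := pz0 i; have := pz1 i; rewrite /vadd /vscale /vsub => z1i z0i.
rewrite (_ : d i - / t * (z1 i - z0 i)
  = ((p i + t * d i - z1 i) - (p i - z0 i)) * / t); last by field; lra.
rewrite Rabs_mult Rabs_inv (Rabs_pos_eq t); last lra.
apply: (Rmult_lt_reg_r t) => //; rewrite Rmult_assoc Rinv_l; last lra.
have := Rabs_triang (p i + t * d i - z1 i) (- (p i - z0 i)); rewrite Rabs_Ropp Rmult_1_r.
move: z1i z0i; rewrite /Rminus; lra.
Qed.

Lemma direction_incl n (Gamma G G' : isom n -> Prop) (V V' : vec n -> Prop) :
  subgroup_En Gamma -> cocompact_translation_pair Gamma G V ->
  fi_cocompact_translation_pair Gamma G' V' ->
  forall d, direction V d -> direction V' d.
Proof.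
move=> GammaE [[_ GGamma] [affV [presV [trV cptV]]]]
  [[G'Gamma [affV' [presV' [trV' _]]]] fiG'].
have [r r_gt0 nearV] : exists2 r, 0 < r & forall x, V x -> near V' r x.
  apply: (quotient_compact_near cptV presV _ affV'.1) => g Gg.
  have [b gb] := trV g Gg; exists b => //.
  apply: (translation_vector_direction GammaE G'Gamma fiG' affV affV' presV' trV'
    (GGamma g Gg)) => //.
  exact: preserved_translation_direction (presV g Gg) gb.
exact: near_direction_incl affV affV' r_gt0 nearV.
Qed.

Lemma affine_translate n (V V' : vec n -> Prop) :
  affine_subspace V -> affine_subspace V' ->
  (forall d, direction V d -> direction V' d) -> (forall d, direction V' d -> direction V d) ->
  exists a, forall y, V' y <-> exists v, V v /\ y = vadd v a.
Proof.
move=> affV affV' VV' V'V; have [[p Vp] _] := affV; have [[p' V'p'] _] := affV'.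
exists (vsub p' p) => y; split=> [V'y | [v [Vv ->]]].
  exists (vadd p (vsub y p')); split; first exact: V'V (direction_sub affV' V'y V'p') _ Vp.
  vec_ring.
by have := VV' _ (direction_sub affV Vv Vp) _ V'p'; congr V'; vec_ring.
Qed.

Theorem mainTheorem7 (n : nat) (Gamma G G' : isom n -> Prop)
  (V V' : vec n -> Prop) :
  subgroup_En Gamma -> discrete Gamma ->
  fi_cocompact_translation_pair Gamma G V ->
  fi_cocompact_translation_pair Gamma G' V' ->
  exists a : vec n, forall y, V' y <-> exists v, V v /\ y = vadd v a.
Proof.
move=> GammaE _ [ctp fi] [ctp' fi'].
apply: affine_translate; [exact: ctp.2.1 | exact: ctp'.2.1 | |].
- exact: direction_incl GammaE ctp (conj ctp' fi').
- exact: direction_incl GammaE ctp' (conj ctp fi).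
Qed.
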